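(* Let $r,k,s_1,\dots,s_k$ be nonnegative integers, $\Gamma$ the complete bipartite supernova quiver with these parameters, and $\boldsymbol\mu=(\mu^1,\dots,\mu^k)$ a $k$-tuple of nonzero partitions, $\mu^i=(\mu^i_1\ge\cdots\ge\mu^i_{s_i+1}\ge0)$. Assume $k>1$ or $v_{(1;0)}>1$, where $\mathbf{v}_{\boldsymbol\mu}=(v_a)_{a\in I}$. Then $\mathbf{v}_{\boldsymbol\mu}\in M_\Gamma$ if and only if $r\geq|\mu^i|+\mu^i_1$ for all $i=1,\dots,k$.
   Context: $\Gamma$ has vertex set $I$ consisting of $(l)$, $l=1,\dots,r$, and $(i;j)$, $i=1,\dots,k$, $j=0,\dots,s_i$; its edges are: one edge between $(l)$ and $(i;0)$ for every $l,i$, and one edge between $(i;j)$ and $(i;j-1)$ for $1\le j\le s_i$. The dimension vector $\mathbf{v}_{\boldsymbol\mu}$: $v_{(l)}=1$, $v_{(i;0)}=|\mu^i|$, $v_{(i;j)}=|\mu^i|-\sum_{f=1}^j\mu^i_f$ for $1\le j\le s_i$. Let $(\cdot,\cdot)$ be the symmetric bilinear form on $\mathbb{Z}^I$ with $(\mathbf{e}_a,\mathbf{e}_a)=2$ and $(\mathbf{e}_a,\mathbf{e}_b)=-$(number of edges joining $a$ and $b$) for $a\neq b$. $M_\Gamma$ is the set of nonzero $\mathbf{u}\in\mathbb{Z}_{\ge0}^I$ with connected support such that $(\mathbf{e}_a,\mathbf{u})\le0$ for all $a\in I$. *)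

From HB Require Import structures.
From mathcomp Require Import all_boot all_order all_algebra.
Set Implicit Arguments. Unset Strict Implicit. Unset Printing Implicit Defensive.
Import Order.TTheory GRing.Theory Num.Theory.
Local Open Scope ring_scope.

(* Vertex (l), l = 1..r, is  inl l'  with l' : 'I_r  (l = l'+1);
   vertex (i;j), i = 1..k, j = 0..s_i, is  inr (Tagged _ j')  with tag i' : 'I_k
   (i = i'+1) and j' : 'I_(s i').+1 (j = j'). *)
Definition vert (r k : nat) (s : 'I_k -> nat) : finType :=
  ('I_r + {i : 'I_k & 'I_(s i).+1})%type.

Definition adj (r k : nat) (s : 'I_k -> nat) (a b : vert r s) : bool :=
  match a, b with
  | inl _, inr p => nat_of_ord (tagged p) == 0%N
  | inr p, inl _ => nat_of_ord (tagged p) == 0%N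
  | inr p, inr q =>
      (tag p == tag q) &&
      (((nat_of_ord (tagged p)).+1 == nat_of_ord (tagged q)) ||
       ((nat_of_ord (tagged q)).+1 == nat_of_ord (tagged p)))
  | inl _, inl _ => false
  end.

Definition cartan (r k : nat) (s : 'I_k -> nat) (a b : vert r s) : int :=
  if a == b then 2%:Z else - (adj a b)%:Z.

Definition bform (r k : nat) (s : 'I_k -> nat) (x y : vert r s -> int) : int :=
  (\sum_(a : vert r s) \sum_(b : vert r s) x a * y b * cartan a b)%R.

Definition basisv (r k : nat) (s : 'I_k -> nat) (a : vert r s) : vert r s -> int :=
  fun b => ((a == b) : nat)%:Z.

Definition connected_support (r k : nat) (s : 'I_k -> nat) (u : vert r s -> int) : Prop :=
  forall a b : vert r s, u a != 0%R -> u b != 0%R ->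
    connect (fun x y => [&& adj x y, u x != 0%R & u y != 0%R]) a b.

Definition in_M (r k : nat) (s : 'I_k -> nat) (u : vert r s -> int) : Prop :=
  [/\ forall a, (0 <= u a)%R,
      exists a, u a != 0%R,
      connected_support u &
      forall a, (bform (basisv a) u <= 0)%R].

(* partitions: mu i f is mu^{i+1}_f for f = 1 .. s_i + 1 (1-based) *)
Definition is_partition (n : nat) (m : nat -> nat) : Prop :=
  forall f, (1 <= f)%N -> (f < n.+1)%N -> (m f.+1 <= m f)%N.

Definition psize (n : nat) (m : nat -> nat) : nat := \sum_(1 <= f < n.+2) m f.

Definition vmu (r k : nat) (s : 'I_k -> nat) (mu : 'I_k -> nat -> nat)
    (a : vert r s) : int :=
  match a with
  | inl _ => 1%:Z
  | inr p => ((psize (s (tag p)) (mu (tag p)))%:Z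
              - (\sum_(1 <= f < (nat_of_ord (tagged p)).+1) mu (tag p) f)%:Z)%R
  end.

From HB Require Import structures.
From mathcomp Require Import all_boot all_order all_algebra.
From mathcomp Require Import zify.
Import Order.TTheory GRing.Theory Num.Theory.
Local Open Scope ring_scope.
Set Implicit Arguments. Unset Strict Implicit.

(* On the arm i the entries of v_mu are the tail sums w_j = mu_{j+1} + ... +
   mu_{s_i+1}, so (e_(i;j), v_mu) = mu_{j+1} - mu_j <= 0 for j > 0 because mu^i
   is a partition, while at the root (e_(i;0), v_mu) = |mu^i| + mu^i_1 - r.
   At a vertex (l) the pairing is 2 - sum_i |mu^i|, which is nonpositive under
   the hypothesis k > 1 or |mu^1| > 1.  Connectedness holds because every (l)
   is joined to every (i;0), and the support of an arm, where w_j decreases, is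
   an initial segment of it. *)

Definition arm {r k : nat} {s : 'I_k -> nat} (i : 'I_k) (j : 'I_(s i).+1) : vert r s :=
  inr (Tagged (fun i0 => 'I_(s i0).+1) j).
Arguments arm {r k s} i j.

Definition tailsum (n : nat) (m : nat -> nat) (j : nat) : nat :=
  (\sum_(j.+1 <= f < n.+2) m f)%N.

Lemma tailsum_eq0 n m j : (n < j)%N -> tailsum n m j = 0%N.
Proof. by move=> ltnj; rewrite /tailsum big_geq. Qed.

Lemma tailsumS n m j : (j <= n)%N -> tailsum n m j = (m j.+1 + tailsum n m j.+1)%N.
Proof. by move=> lejn; rewrite /tailsum big_ltn // !ltnS. Qed.

Lemma psize_tailsum n m : psize n m = tailsum n m 0.
Proof. by []. Qed.

Lemma sum_vert r k (s : 'I_k -> nat) (F : vert r s -> int) :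
  \sum_(a : vert r s) F a =
    \sum_(l < r) F (inl l) + \sum_(i < k) \sum_(j < (s i).+1) F (arm i j).
Proof.
rewrite /vert big_sumType; congr (_ + _).
rewrite (@sig_big_dep _ 0 +%R _ _ xpredT (fun _ => xpredT)
           (fun i (j : 'I_(s i).+1) => F (arm i j))) /=.
by apply: eq_bigr => -[i j].
Qed.

Lemma sum_ord_eq_mul n d (F : nat -> int) :
  \sum_(j < n) (nat_of_ord j == d)%:Z * F j = (d < n)%:Z * F d.
Proof.
elim: n => [|n IHn]; first by rewrite big_ord0 ltn0 mul0r.
rewrite big_ord_recr /= IHn ltnS.
by case: (ltngtP d n) => [|_|->]; rewrite ?mul0r ?addr0 ?add0r.
Qed.

Lemma adj_irrefl r k (s : 'I_k -> nat) (a : vert r s) : adj a a = false.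
Proof. by case: a => [l|[i j]] //=; rewrite eqxx /= orbb (gtn_eqF (ltnSn _)). Qed.

Lemma adj_sym r k (s : 'I_k -> nat) : symmetric (@adj r k s).
Proof. by case=> [l|[i j]] [l'|[i' j']] //=; rewrite eq_sym orbC. Qed.

Lemma bform_basisv r k (s : 'I_k -> nat) (a : vert r s) (u : vert r s -> int) :
  bform (basisv a) u = 2 * u a - \sum_b (adj a b)%:Z * u b.
Proof.
rewrite /bform (bigD1 a) //= [X in _ + X]big1 => [|c ca]; last first.
  by apply: big1 => b _; rewrite /basisv eq_sym (negbTE ca) !mul0r.
rewrite addr0 /basisv eqxx (bigD1 a) //= [X in _ - X](bigD1 a) //= adj_irrefl.
rewrite /cartan eqxx mul0r add0r mul1r mulrC -sumrN.
congr (_ + _); apply: eq_bigr => b ba.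
by rewrite eq_sym (negbTE ba) mul1r mulrN mulrC.
Qed.

Lemma sum_nat_int (I : finType) (F : I -> nat) :
  (\sum_(i : I) F i)%N%:Z = \sum_(i : I) (F i)%:Z.
Proof. by elim/big_rec2: _ => // i x y _ <-; rewrite PoszD. Qed.

Section DimensionVector.

Variables (r k : nat) (s : 'I_k -> nat) (mu : 'I_k -> nat -> nat).

Local Notation v := (vmu (r:=r) (s:=s) mu).
Local Notation w i := (tailsum (s i) (mu i)).

Lemma vmu_arm i (j : 'I_(s i).+1) : v (arm i j) = (w i j)%:Z.
Proof.
rewrite /vmu /= /psize (@big_cat_nat _ _ _ j.+1) //= ?ltnS; last first.
  by rewrite ltnW // ltnS ltn_ord.
rewrite /tailsum PoszD; lia.
Qed.

Lemma vmu_ge0 a : 0 <= v a.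
Proof. by case: a => [l|[i j]] //; rewrite -/(arm i j) vmu_arm. Qed.

Lemma adj_vmu_inl (l : 'I_r) :
  \sum_b (adj (inl l) b)%:Z * v b = \sum_i (psize (s i) (mu i))%:Z.
Proof.
rewrite sum_vert big1 ?add0r => [|l' _]; last by rewrite mul0r.
apply: eq_bigr => i _; under eq_bigr => j _ do rewrite vmu_arm.
by rewrite (sum_ord_eq_mul _ _ (fun n => (w i n)%:Z)) mul1r.
Qed.

Lemma adj_vmu_arm i (j : 'I_(s i).+1) :
  \sum_b (adj (arm i j) b)%:Z * v b =
    (if nat_of_ord j == 0%N then r else 0%N)%:Z + (w i j.+1)%:Z
    + (if (0 < j)%N then w i j.-1 else 0%N)%:Z.
Proof.
rewrite sum_vert -addrA; congr (_ + _).
  under eq_bigr => l _ do rewrite /= mulr1.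
  by rewrite sumr_const card_ord; case: eqP => _; rewrite ?mul0rn // natz.
rewrite (bigD1 i) // [X in _ + X = _]big1 ?addr0 => [|i' ii']; last first.
  by apply: big1 => j' _; rewrite /= eq_sym (negbTE ii') mul0r.
under eq_bigr => j' _ do rewrite vmu_arm /= eqxx /=.
rewrite (eq_bigr (fun j' : 'I_(s i).+1 => (nat_of_ord j' == j.+1)%:Z * (w i j')%:Z
     + (j'.+1 == j)%:Z * (w i j')%:Z)); last first.
  move=> j' _; rewrite -mulrDl; congr (_ * _).
  by rewrite (eq_sym j.+1); case: eqP => [->|]; case: eqP => //=; lia.
rewrite big_split /= (sum_ord_eq_mul _ _ (fun n => (w i n)%:Z)).
congr (_ + _).
  by case: ltnP => [|/tailsum_eq0->]; rewrite ?mul1r ?mulr0.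
case: j => [[|n] ltns] /=; first by rewrite big1 // => j' _; rewrite mul0r.
rewrite (eq_bigr (fun j' : 'I_(s i).+1 => (nat_of_ord j' == n)%:Z * (w i j')%:Z)) //.
by rewrite (sum_ord_eq_mul _ _ (fun n => (w i n)%:Z)) ltnW // mul1r.
Qed.

Lemma bform_vmu_inl (l : 'I_r) :
  bform (basisv (inl l)) v = 2 - (\sum_i psize (s i) (mu i))%N%:Z.
Proof. by rewrite bform_basisv adj_vmu_inl sum_nat_int. Qed.

Lemma bform_vmu_root i :
  bform (basisv (arm i ord0)) v = (psize (s i) (mu i) + mu i 1)%:Z - r%:Z.
Proof.
rewrite bform_basisv adj_vmu_arm vmu_arm /= psize_tailsum tailsumS //; lia.
Qed.

Lemma bform_vmu_arm i (j : 'I_(s i).+1) : (0 < j)%N ->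
  bform (basisv (arm i j)) v = (mu i j.+1)%:Z - (mu i j)%:Z.
Proof.
case: j => [[|n] ltns] //= _; rewrite bform_basisv adj_vmu_arm vmu_arm /=.
rewrite (@tailsumS _ _ n) 1?(@tailsumS _ _ n.+1) //; lia.
Qed.

Hypothesis psize_gt0 : forall i, (0 < psize (s i) (mu i))%N.

Let w0_gt0 i : (0 < w i 0)%N. Proof. exact: psize_gt0. Qed.

Let e := fun x y : vert r s => [&& adj x y, v x != 0 & v y != 0].

Lemma connect_inl_arm (l : 'I_r) i (j : 'I_(s i).+1) :
  v (arm i j) != 0 -> connect e (inl l) (arm i j).
Proof.
rewrite vmu_arm; case: j => n /=; elim: n => [|n IHn] ltns wn_neq0.
  by apply: connect1; rewrite /e vmu_arm /=; have := w0_gt0 i; lia.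
have ltns' : (n < (s i).+1)%N by apply: ltnW.
have wn1_neq0 : (w i n)%:Z != 0 by rewrite tailsumS //; lia.
apply: connect_trans (IHn ltns' wn1_neq0) (connect1 _).
by rewrite /e !vmu_arm /= !eqxx /=; apply/andP.
Qed.

Lemma vmu_connected_support : (0 < r)%N -> (0 < k)%N -> connected_support v.
Proof.
move=> r_gt0 k_gt0; pose l0 := Ordinal r_gt0; pose i0 := Ordinal k_gt0.
have e_sym : symmetric e.
  by move=> x y; rewrite /e adj_sym; case: (v x != 0); rewrite ?andbF ?andbT.
have hub a : v a != 0 -> connect e (inl l0) a.
  case: a => [l _|[i j]]; last exact: connect_inl_arm.
  have root_neq0 : v (arm i0 ord0) != 0 by rewrite vmu_arm /=; have := w0_gt0 i0; lia.
  apply: connect_trans (connect_inl_arm l0 root_neq0) (connect1 _).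
  by rewrite /e adj_sym root_neq0 /=.
move=> a b /hub la /hub lb; apply: connect_trans lb.
by rewrite (sym_connect_sym e_sym).
Qed.

End DimensionVector.

Lemma sum_gt1 k (p : 'I_k -> nat) :
  (forall i, 0 < p i)%N -> (1 < k)%N \/ (exists i, 1 < p i)%N -> (1 < \sum_i p i)%N.
Proof.
move=> p_gt0 [k_gt1|[i pi_gt1]].
  pose i0 := Ordinal (ltnW k_gt1); pose i1 := Ordinal k_gt1.
  rewrite (bigD1 i0) // (bigD1 i1) //=.
  by have := p_gt0 i0; have := p_gt0 i1; lia.
by rewrite (bigD1 i) //=; lia.
Qed.

Theorem lemma2p6 (r k : nat) (s : 'I_k -> nat) (mu : 'I_k -> nat -> nat)
  (hpart : forall i : 'I_k, is_partition (s i) (mu i))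
  (hnz : forall i : 'I_k, (0 < psize (s i) (mu i))%N)
  (hkv : (1 < k)%N \/
         exists i : 'I_k, nat_of_ord i = 0%N /\
           (1 < vmu mu (inr (Tagged (fun i0 : 'I_k => 'I_(s i0).+1) (ord0 : 'I_(s i).+1)) : vert r s))%R) :
  in_M (vmu (r:=r) (s:=s) mu) <->
  (forall i : 'I_k, (psize (s i) (mu i) + mu i 1 <= r)%N).
Proof.
split=> [[_ _ _ bform_le0] i|r_ge].
  by have := bform_le0 (arm i ord0); rewrite bform_vmu_root; lia.
have k_gt0 : (0 < k)%N by case: hkv => [|[[i ltik] _]]; lia.
have r_gt0 : (0 < r)%N by have := r_ge (Ordinal k_gt0); have := hnz (Ordinal k_gt0); lia.
split; first exact: vmu_ge0.
- exists (arm (Ordinal k_gt0) ord0).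
  by rewrite vmu_arm -psize_tailsum; have := hnz (Ordinal k_gt0); lia.
- exact: vmu_connected_support.
case=> [l|[i j]].
  rewrite bform_vmu_inl; suff : (1 < \sum_i psize (s i) (mu i))%N by lia.
  apply: sum_gt1 => //; case: hkv => [|[i [_ root_gt1]]]; [by left | right; exists i].
  by move: root_gt1; rewrite -/(arm i ord0) vmu_arm psize_tailsum /=; lia.
rewrite -/(arm i j); have [j0|j_gt0] := posnP j.
  rewrite (_ : j = ord0); last exact: val_inj.
  by rewrite bform_vmu_root; have := r_ge i; lia.
by rewrite bform_vmu_arm //; have := hpart i j j_gt0 (ltn_ord j); lia.
Qed.
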